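(* Let $\Gamma$ be a group, $\alpha\in\mathrm{Aut}(\Gamma)$ and $k\in\Gamma$, and put $\tilde\alpha=\mathrm{ad}(k)\circ\alpha$, where $\mathrm{ad}(k)(g)=kgk^{-1}$. Then $\bigoplus_{\mathbf{Q}_2}\Gamma\rtimes_\alpha V\cong\bigoplus_{\mathbf{Q}_2}\Gamma\rtimes_{\tilde\alpha}V$.
   Context: Cantor space $\mathfrak C=\{0,1\}^{\mathbf N}$; $C_m=\{m\cdot x\}$. Thompson's group $V$: homeomorphisms $v$ with $v(m_kx)=m'_kx$ for partitions $\mathfrak C=\bigsqcup C_{m_k}=\bigsqcup C_{m'_k}$; slope $v'(x)=2^{|m_k|-|m'_k|}$ on $C_{m_k}$. $\mathbf{Q}_2\subset\mathfrak C$: eventually-zero sequences. For a group $\Gamma$ and $\alpha\in\mathrm{Aut}(\Gamma)$, $\bigoplus_{\mathbf{Q}_2}\Gamma\rtimes_\alpha V$ is the semidirect product of finitely supported maps $\mathbf{Q}_2\to\Gamma$ by $V$ acting via $(v\cdot a)(x)=\alpha^{\log_2 v'(v^{-1}x)}(a(v^{-1}x))$ (the fraction group associated with $(\Gamma,\alpha)$). *)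

From Stdlib Require Import ZArith List ClassicalEpsilon.
Import ListNotations.

Record Group := {
  gcar :> Type;
  gmul : gcar -> gcar -> gcar;
  gone : gcar;
  ginv : gcar -> gcar;
  gmulA : forall x y z, gmul x (gmul y z) = gmul (gmul x y) z;
  gmul1 : forall x, gmul gone x = x;
  gmulV : forall x, gmul (ginv x) x = gone
}.
Arguments gmul {g}. Arguments gone {g}. Arguments ginv {g}.

Definition is_automorphism (G : Group) (alpha beta : G -> G) : Prop :=
  (forall x y, alpha (gmul x y) = gmul (alpha x) (alpha y)) /\
  (forall x, beta (alpha x) = x) /\ (forall x, alpha (beta x) = x).

Definition apow (G : Group) (alpha beta : G -> G) (n : Z) : G -> G :=
  match n with
  | Z0 => fun g => g
  | Zpos p => Nat.iter (Pos.to_nat p) alpha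
  | Zneg p => Nat.iter (Pos.to_nat p) beta
  end.

Definition ad_comp (G : Group) (k : G) (alpha : G -> G) : G -> G :=
  fun g => gmul (gmul k (alpha g)) (ginv k).
Definition ad_comp_inv (G : Group) (k : G) (beta : G -> G) : G -> G :=
  fun g => beta (gmul (gmul (ginv k) g) k).

Definition Cantor := nat -> bool.
Definition word := list bool.

Definition pre (m : word) (x : Cantor) : Cantor :=
  fun n => if Nat.ltb n (length m) then nth n m false else x (n - length m).

Definition inC (m : word) (x : Cantor) : Prop := exists y, x = pre m y.

Definition cantor_partition (ms : list word) : Prop :=
  forall x, exists! k, k < length ms /\ inC (nth k ms []) x.

Definition V_data (v : Cantor -> Cantor) (ps : list (word * word)) : Prop :=
  cantor_partition (map fst ps) /\ cantor_partition (map snd ps) /\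
  forall k x, k < length ps ->
    v (pre (fst (nth k ps ([], []))) x) = pre (snd (nth k ps ([], []))) x.

Definition bijective {A B} (f : A -> B) : Prop :=
  (forall x y, f x = f y -> x = y) /\ (forall y, exists x, f x = y).

Definition inV (v : Cantor -> Cantor) : Prop :=
  bijective v /\ exists ps, V_data v ps.

(* log_2 v'(x) = |m_k| - |m'_k| on C_{m_k} (well defined for v in V) *)
Definition logslope_rel (v : Cantor -> Cantor) (x : Cantor) (d : Z) : Prop :=
  exists ps k, V_data v ps /\ k < length ps /\ inC (fst (nth k ps ([], []))) x /\
    d = (Z.of_nat (length (fst (nth k ps ([], []))))
         - Z.of_nat (length (snd (nth k ps ([], [])))))%Z.
Definition logslope (v : Cantor -> Cantor) (x : Cantor) : Z :=
  epsilon (inhabits 0%Z) (logslope_rel v x).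

Definition vinv (v : Cantor -> Cantor) (x : Cantor) : Cantor :=
  epsilon (inhabits (fun _ => false)) (fun y => v y = x).

(* Q_2 : eventually zero sequences *)
Definition inQ2 (x : Cantor) : Prop := exists N, forall n, N <= n -> x n = false.

(* finitely supported maps Q_2 -> Gamma (extended by 1 outside Q_2) *)
Definition finsupp (G : Group) (a : Cantor -> G) : Prop :=
  exists s : list Cantor, forall x, a x <> gone -> In x s /\ inQ2 x.

Definition FGel (G : Group) : Type := ((Cantor -> G) * (Cantor -> Cantor))%type.

Definition inFG (G : Group) (p : FGel G) : Prop := finsupp G (fst p) /\ inV (snd p).

Definition Vact (G : Group) (alpha beta : G -> G) (v : Cantor -> Cantor)
  (a : Cantor -> G) : Cantor -> G :=
  fun x => apow G alpha beta (logslope v (vinv v x)) (a (vinv v x)).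

Definition FGmul (G : Group) (alpha beta : G -> G) (p q : FGel G) : FGel G :=
  (fun x => gmul (fst p x) (Vact G alpha beta (snd p) (fst q) x),
   fun x => snd p (snd q x)).

Definition FG_isomorphic (G : Group) (a1 b1 a2 b2 : G -> G) : Prop :=
  exists Phi : FGel G -> FGel G,
    (forall p, inFG G p -> inFG G (Phi p)) /\
    (forall p q, inFG G p -> inFG G q -> Phi p = Phi q -> p = q) /\
    (forall q, inFG G q -> exists p, inFG G p /\ Phi p = q) /\
    (forall p q, inFG G p -> inFG G q ->
       Phi (FGmul G a1 b1 p q) = FGmul G a2 b2 (Phi p) (Phi q)).

From Stdlib Require Import ZArith List ClassicalEpsilon Lia FunctionalExtensionality.
Import ListNotations.

(* Put T g := k * alpha g.  Then alpha~^n g = T^n g * (T^n 1)^-1 and T^n (g h) = T^n g * alpha^n h,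
   so conjugating by values of T^n turns alpha~-twisted products into alpha-twisted ones.
   For x in Q_2 let L x be the position of its last digit 1 and f x := T^(-L x) 1.  Then
   (a, v) |-> (f * a * (v .T f)^-1, v), where (v .T f)(v y) = T^(log2 v'(y)) (f y), is a
   homomorphism between the two fraction groups, with an evident inverse.  It preserves finite
   supports because v (m_k u) = m'_k u lowers L by exactly log2 v', so that v .T f = f except at
   the finitely many points m'_k 0^oo. *)

Section GroupFacts.
Variable G : Group.
Implicit Types x y z : G.

Lemma gmulVr x : gmul x (ginv x) = gone.
Proof.
  rewrite <- (gmul1 G (gmul x (ginv x))), <- (gmulV G (ginv x)) at 1.
  rewrite <- gmulA, (gmulA G (ginv x) x), gmulV, gmul1. apply gmulV.
Qed.

Lemma gmul1r x : gmul x gone = x.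
Proof. now rewrite <- (gmulV G x), gmulA, gmulVr, gmul1. Qed.

Lemma gmulI x y z : gmul x y = gmul x z -> y = z.
Proof.
  intro E. now rewrite <- (gmul1 G y), <- (gmul1 G z), <- (gmulV G x), <- !gmulA, E.
Qed.

Lemma gmulK x y : gmul (gmul x y) (ginv y) = x.
Proof. now rewrite <- gmulA, gmulVr, gmul1r. Qed.

Lemma gmulKV x y : gmul (gmul x (ginv y)) y = x.
Proof. now rewrite <- gmulA, gmulV, gmul1r. Qed.

Lemma gmulVK x y : gmul (ginv x) (gmul x y) = y.
Proof. now rewrite gmulA, gmulV, gmul1. Qed.

End GroupFacts.

Definition inverse_pair {A : Type} (f g : A -> A) : Prop :=
  (forall x, g (f x) = x) /\ (forall x, f (g x) = x).

Section Powers.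
Variable G : Group.
Variables f g : G -> G.
Hypothesis fg : inverse_pair f g.

Lemma apow_nonneg n : (0 <= n)%Z -> apow G f g n = Nat.iter (Z.to_nat n) f.
Proof. intro H. destruct n; simpl; [reflexivity | reflexivity | lia]. Qed.

Lemma apow_nonpos n : (n <= 0)%Z -> apow G f g n = Nat.iter (Z.to_nat (- n)) g.
Proof. intro H. destruct n; simpl; [reflexivity | lia | reflexivity]. Qed.

Lemma apow_succ n x : apow G f g (Z.succ n) x = f (apow G f g n x).
Proof.
  destruct fg as [gK fK]. destruct (Z_le_gt_dec 0 n).
  - rewrite !apow_nonneg by lia.
    now replace (Z.to_nat (Z.succ n)) with (S (Z.to_nat n)) by lia.
  - rewrite !apow_nonpos by lia.
    replace (Z.to_nat (- n)) with (S (Z.to_nat (- Z.succ n))) by lia.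
    simpl. now rewrite fK.
Qed.

Lemma apow_pred n x : apow G f g (Z.pred n) x = g (apow G f g n x).
Proof.
  destruct fg as [gK fK]. destruct (Z_le_gt_dec n 0).
  - rewrite !apow_nonpos by lia.
    now replace (Z.to_nat (- Z.pred n)) with (S (Z.to_nat (- n))) by lia.
  - rewrite !apow_nonneg by lia.
    replace (Z.to_nat n) with (S (Z.to_nat (Z.pred n))) by lia.
    simpl. now rewrite gK.
Qed.

Lemma apow_add n m x : apow G f g (n + m) x = apow G f g n (apow G f g m x).
Proof.
  revert x. induction n using Z.peano_ind; intro x.
  - reflexivity.
  - now rewrite Z.add_succ_l, !apow_succ, IHn.
  - now rewrite Z.add_pred_l, !apow_pred, IHn.
Qed.

End Powers.

Section PowerLaw.
Variable G : Group.
Variables f1 g1 f2 g2 f3 g3 : G -> G.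
Hypotheses (fg1 : inverse_pair f1 g1) (fg2 : inverse_pair f2 g2) (fg3 : inverse_pair f3 g3).
Hypothesis law : forall x y, gmul (f1 x) (f2 y) = f3 (gmul x y).

Lemma apow_mul_compat n x y :
  gmul (apow G f1 g1 n x) (apow G f2 g2 n y) = apow G f3 g3 n (gmul x y).
Proof.
  assert (law_inv : forall x y, gmul (g1 x) (g2 y) = g3 (gmul x y)).
  { intros x' y'. destruct fg1 as [_ K1], fg2 as [_ K2], fg3 as [K3 _].
    now rewrite <- (K3 (gmul (g1 x') (g2 y'))), <- law, K1, K2. }
  revert x y. induction n using Z.peano_ind; intros x y.
  - reflexivity.
  - now rewrite !apow_succ, law, IHn.
  - now rewrite !apow_pred, law_inv, IHn.
Qed.

End PowerLaw.

Lemma apow_automorphism_one (G : Group) (f g : G -> G) n :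
  is_automorphism G f g -> apow G f g n gone = gone.
Proof.
  intros [hom fg]. apply (gmulI G (apow G f g n gone)).
  rewrite (apow_mul_compat G f g f g f g fg fg fg), !gmul1r; [reflexivity|].
  intros x y. now rewrite hom.
Qed.

Section Twist.
Variable G : Group.
Variables (alpha beta : G -> G) (k : G).
Hypothesis Ha : is_automorphism G alpha beta.

Definition twist (g : G) : G := gmul k (alpha g).
Definition twist_inv (g : G) : G := beta (gmul (ginv k) g).

Local Notation T n := (apow G twist twist_inv n).
Local Notation A n := (apow G alpha beta n).
Local Notation At n := (apow G (ad_comp G k alpha) (ad_comp_inv G k beta) n).

Lemma twist_inverse_pair : inverse_pair twist twist_inv.
Proof.
  destruct Ha as [_ [bK aK]]. unfold twist, twist_inv. split; intro x.
  - now rewrite gmulVK, bK.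
  - now rewrite aK, gmulA, gmulVr, gmul1.
Qed.

Lemma ad_comp_automorphism :
  is_automorphism G (ad_comp G k alpha) (ad_comp_inv G k beta).
Proof.
  destruct Ha as [hom [bK aK]]. unfold ad_comp, ad_comp_inv. split; [|split].
  - intros x y. rewrite hom, !gmulA, gmulKV. reflexivity.
  - intro x. now rewrite <- !gmulA, gmulVK, gmulV, gmul1r, bK.
  - intro x. now rewrite aK, !gmulA, gmulVr, gmul1, gmulK.
Qed.

Lemma apow_twist_mul n x y : gmul (T n x) (A n y) = T n (gmul x y).
Proof.
  destruct Ha as [hom fg]. apply apow_mul_compat; [exact twist_inverse_pair | exact fg
  | exact twist_inverse_pair |].
  intros x' y'. unfold twist. now rewrite <- gmulA, hom.
Qed.

Lemma apow_ad_comp_twist n x y : gmul (At n x) (T n y) = T n (gmul x y).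
Proof.
  destruct ad_comp_automorphism as [_ fg].
  apply apow_mul_compat; [exact fg | exact twist_inverse_pair | exact twist_inverse_pair |].
  intros x' y'. unfold ad_comp, twist. destruct Ha as [hom _].
  now rewrite <- gmulA, gmulVK, hom, gmulA.
Qed.

Lemma apow_ad_comp n g : At n g = gmul (T n g) (ginv (T n gone)).
Proof. now rewrite <- (gmul1r G g) at 2; rewrite <- apow_ad_comp_twist, gmulK. Qed.

Lemma twisted_cocycle n g b u :
  gmul (ginv (T n g)) (At n (gmul (gmul g b) (ginv u))) = gmul (A n b) (ginv (T n u)).
Proof.
  destruct Ha as [hom fg].
  assert (A_inv : A n (ginv u) = gmul (ginv (T n u)) (T n gone)).
  { apply (gmulI G (T n u)). now rewrite gmulA, gmulVr, gmul1, apow_twist_mul, gmulVr. }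
  rewrite apow_ad_comp, <- gmulA, <- apow_twist_mul,
    <- (apow_mul_compat G alpha beta alpha beta alpha beta fg fg fg), A_inv.
  - now rewrite <- gmulA, gmulVK, <- !gmulA, gmulVr, gmul1r.
  - intros x y. now rewrite hom.
Qed.

End Twist.

Definition set_bit (y : Cantor) (n : nat) : Cantor :=
  fun j => if Nat.eqb j n then true else y j.

Lemma pre_set_bit m u n :
  length m <= n -> set_bit (pre m u) n = pre m (set_bit u (n - length m)).
Proof.
  intro H. apply functional_extensionality. intro j. unfold set_bit, pre.
  destruct (Nat.eqb_spec j n), (Nat.ltb_spec j (length m)),
    (Nat.eqb_spec (j - length m) (n - length m)); try lia; reflexivity.
Qed.

Lemma inQ2_pre m u : inQ2 (pre m u) <-> inQ2 u.
Proof.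
  unfold inQ2, pre. split; intros [N HN].
  - exists N. intros n Hn. specialize (HN (n + length m) ltac:(lia)).
    destruct (Nat.ltb_spec (n + length m) (length m)); [lia|].
    now replace (n + length m - length m) with n in HN by lia.
  - exists (N + length m). intros n Hn.
    destruct (Nat.ltb_spec n (length m)); [lia|]. apply HN. lia.
Qed.

Lemma V_data_piece v ps y : V_data v ps -> exists k u, k < length ps /\
  y = pre (fst (nth k ps ([], []))) u /\ v y = pre (snd (nth k ps ([], []))) u.
Proof.
  intros [Hdom [_ Hv]]. destruct (Hdom y) as [k [[Hk [u Hu]] _]].
  rewrite length_map in Hk.
  change ([] : word) with (fst (([] : word), ([] : word))) in Hu. rewrite map_nth in Hu.
  exists k, u. repeat split; [exact Hk | exact Hu |]. rewrite Hu. now apply Hv.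
Qed.

Lemma inV_inQ2 v y : inV v -> inQ2 (v y) <-> inQ2 y.
Proof.
  intros [_ [ps HV]]. destruct (V_data_piece v ps y HV) as [k [u [_ [Ey Evy]]]].
  rewrite Evy, Ey, !inQ2_pre. reflexivity.
Qed.

Lemma vinv_spec v x : (exists y, v y = x) -> v (vinv v x) = x.
Proof. exact (epsilon_spec _ (fun y => v y = x)). Qed.

Lemma vinv_r v x : inV v -> v (vinv v x) = x.
Proof. intros [[_ Hsurj] _]. apply vinv_spec, Hsurj. Qed.

Lemma vinv_comp v w x :
  inV v -> inV w -> vinv (fun z => v (w z)) x = vinv w (vinv v x).
Proof.
  intros Hv Hw.
  assert (E : v (w (vinv (fun z => v (w z)) x)) = x).
  { apply (vinv_spec (fun z => v (w z))). exists (vinv w (vinv v x)).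
    now rewrite !vinv_r. }
  apply (proj1 (proj1 Hw)), (proj1 (proj1 Hv)). now rewrite !vinv_r.
Qed.

Definition shifts (v : Cantor -> Cantor) (y : Cantor) (d : Z) : Prop :=
  exists N, forall n, N <= n ->
    exists j, v (set_bit y n) = set_bit (v y) j /\ Z.of_nat j = (Z.of_nat n - d)%Z.

Lemma shifts_piece v ps k u : V_data v ps -> k < length ps ->
  shifts v (pre (fst (nth k ps ([], []))) u)
    (Z.of_nat (length (fst (nth k ps ([], []))))
     - Z.of_nat (length (snd (nth k ps ([], [])))))%Z.
Proof.
  intros [_ [_ Hv]] Hk.
  set (m := fst (nth k ps ([], []))). set (m' := snd (nth k ps ([], []))).
  exists (length m). intros n Hn. exists (n - length m + length m'). split; [|lia].
  rewrite pre_set_bit by exact Hn. unfold m, m'. rewrite !Hv by exact Hk.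
  rewrite pre_set_bit by lia. do 2 f_equal. lia.
Qed.

Lemma shifts_unique v y d1 d2 : inQ2 (v y) -> shifts v y d1 -> shifts v y d2 -> d1 = d2.
Proof.
  intros [M HM] [N1 H1] [N2 H2].
  set (n := N1 + N2 + M + Z.abs_nat d1 + Z.abs_nat d2).
  destruct (H1 n ltac:(unfold n; lia)) as [j1 [E1 F1]].
  destruct (H2 n ltac:(unfold n; lia)) as [j2 [E2 F2]].
  assert (Hj1 : M <= j1).
  { unfold n in F1. rewrite !Nat2Z.inj_add, Zabs2Nat.id_abs in F1. lia. }
  destruct (Nat.eq_dec j1 j2) as [<-|ne]; [lia|].
  assert (X := f_equal (fun x => x j1) (eq_trans (eq_sym E1) E2)). simpl in X.
  unfold set_bit in X. rewrite Nat.eqb_refl in X.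
  destruct (Nat.eqb_spec j1 j2); [contradiction|]. rewrite HM in X by exact Hj1. discriminate.
Qed.

Lemma shifts_comp v w z d e :
  shifts w z e -> shifts v (w z) d -> shifts (fun x => v (w x)) z (d + e).
Proof.
  intros [Nw Hw] [Nv Hv]. exists (Nw + Nv + Z.abs_nat e). intros n Hn.
  destruct (Hw n ltac:(lia)) as [j [E F]].
  assert (Hj : Nv <= j).
  { apply Nat2Z.inj_le in Hn. rewrite !Nat2Z.inj_add, Zabs2Nat.id_abs in Hn. lia. }
  destruct (Hv j Hj) as [j' [E' F']]. exists j'. split; [|lia]. now rewrite E.
Qed.

(* The log-slope read off from the action on tails.  It needs no partition data, so the chain
   rule [slope_comp] holds without knowing that [V] is closed under composition. *)
Definition slope (v : Cantor -> Cantor) (y : Cantor) : Z := epsilon (inhabits 0%Z) (shifts v y).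

Lemma slope_eq v y d : inQ2 (v y) -> shifts v y d -> slope v y = d.
Proof.
  intros Hvy Hd. apply (shifts_unique v y); [exact Hvy | | exact Hd].
  unfold slope. apply epsilon_spec. now exists d.
Qed.

Lemma slope_shifts v y : inV v -> shifts v y (slope v y).
Proof.
  intros [_ [ps HV]]. unfold slope. apply epsilon_spec.
  destruct (V_data_piece v ps y HV) as [k [u [Hk [-> _]]]].
  eexists. now apply shifts_piece.
Qed.

Lemma logslope_slope v y : inV v -> inQ2 y -> logslope v y = slope v y.
Proof.
  intros Hv Hy. symmetry. apply slope_eq; [now apply inV_inQ2|].
  destruct Hv as [_ [ps HV]].
  assert (R : logslope_rel v y (logslope v y)).
  { unfold logslope. apply epsilon_spec.
    destruct (V_data_piece v ps y HV) as [k [u [Hk [Ey _]]]].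
    eexists. exists ps, k. split; [exact HV|]. split; [exact Hk|].
    split; [exists u; exact Ey | reflexivity]. }
  destruct R as [ps' [k [HV' [Hk [[u ->] ->]]]]]. now apply shifts_piece.
Qed.

Lemma slope_comp v w z : inV v -> inV w -> inQ2 z ->
  slope (fun x => v (w x)) z = (slope v (w z) + slope w z)%Z.
Proof.
  intros Hv Hw Hz. apply slope_eq.
  - now apply inV_inQ2, inV_inQ2.
  - apply shifts_comp; now apply slope_shifts.
Qed.

Definition last_one_at (x : Cantor) (j : nat) : Prop :=
  x j = true /\ forall i, j < i -> x i = false.

Definition last_one (x : Cantor) : nat := epsilon (inhabits 0) (last_one_at x).

Lemma last_one_at_unique x j1 j2 : last_one_at x j1 -> last_one_at x j2 -> j1 = j2.
Proof.
  intros [A1 B1] [A2 B2]. destruct (Nat.lt_total j1 j2) as [h|[h|h]]; [| exact h |].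
  - rewrite B1 in A2 by exact h. discriminate.
  - rewrite B2 in A1 by exact h. discriminate.
Qed.

Lemma last_one_eq x j : last_one_at x j -> last_one x = j.
Proof.
  intro H. apply (last_one_at_unique x); [|exact H].
  unfold last_one. apply epsilon_spec. now exists j.
Qed.

Lemma last_one_at_pre m u j : last_one_at u j -> last_one_at (pre m u) (length m + j).
Proof.
  intros [A B]. unfold pre. split.
  - destruct (Nat.ltb_spec (length m + j) (length m)); [lia|].
    now replace (length m + j - length m) with j by lia.
  - intros i Hi. destruct (Nat.ltb_spec i (length m)); [lia|]. apply B. lia.
Qed.

Lemma last_one_at_exists u : inQ2 u -> u <> (fun _ => false) -> exists j, last_one_at u j.
Proof.
  intros [N HN] Hu. induction N as [|N IH].
  - exfalso. apply Hu, functional_extensionality. intro i. apply HN. lia.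
  - destruct (u N) eqn:E.
    + exists N. split; [exact E|]. intros i Hi. apply HN. lia.
    + apply IH. intros n Hn.
      destruct (Nat.eq_dec n N) as [->|]; [exact E|]. apply HN. lia.
Qed.

Definition breakpoints (ps : list (word * word)) : list Cantor :=
  map (fun p => pre (snd p) (fun _ => false)) ps.

Lemma last_one_slope v ps y : inV v -> V_data v ps -> inQ2 y ->
  ~ In (v y) (breakpoints ps) ->
  Z.of_nat (last_one y) = (Z.of_nat (last_one (v y)) + slope v y)%Z.
Proof.
  intros Hv HV Hy Hbreak.
  destruct (V_data_piece v ps y HV) as [k [u [Hk [Ey Evy]]]].
  assert (Hu : inQ2 u) by (apply (inQ2_pre (fst (nth k ps ([], [])))); now rewrite <- Ey).
  assert (Hu0 : u <> (fun _ => false)).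
  { intros ->. apply Hbreak. rewrite Evy. unfold breakpoints.
    apply (in_map (fun p => pre (snd p) (fun _ => false))), nth_In, Hk. }
  destruct (last_one_at_exists u Hu Hu0) as [j Hj].
  assert (Hshift := shifts_piece v ps k u HV Hk). rewrite <- Ey in Hshift.
  rewrite (slope_eq v y _ ltac:(now apply inV_inQ2) Hshift).
  assert (Ly := last_one_at_pre (fst (nth k ps ([], []))) u j Hj). rewrite <- Ey in Ly.
  assert (Lvy := last_one_at_pre (snd (nth k ps ([], []))) u j Hj). rewrite <- Evy in Lvy.
  rewrite (last_one_eq y _ Ly), (last_one_eq (v y) _ Lvy).
  lia.
Qed.

Lemma finsupp_transfer (G : Group) (a a' : Cantor -> G) (s : list Cantor) :
  finsupp G a -> (forall x, ~ inQ2 x -> a' x = a x) ->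
  (forall x, inQ2 x -> ~ In x s -> a x = gone -> a' x = gone) -> finsupp G a'.
Proof.
  intros [l Hl] Hout Hin. exists (l ++ s). intros x Hx.
  destruct (excluded_middle_informative (inQ2 x)) as [Q|Q].
  - split; [|exact Q]. apply in_or_app.
    destruct (excluded_middle_informative (a x = gone)) as [E|E]; [|left; now apply Hl].
    destruct (excluded_middle_informative (In x s)) as [I|I]; [now right|].
    exfalso. now apply Hx, Hin.
  - rewrite Hout in Hx by exact Q. destruct (Hl x Hx).
    split; [now apply in_or_app; left | assumption].
Qed.

Section Gauge.
Variable G : Group.
Variables (alpha beta : G -> G) (k : G).
Hypothesis Ha : is_automorphism G alpha beta.

Local Notation T n := (apow G (twist G alpha k) (twist_inv G beta k) n).
Local Notation alpha' := (ad_comp G k alpha).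
Local Notation beta' := (ad_comp_inv G k beta).

Definition gauge (x : Cantor) : G := T (- Z.of_nat (last_one x)) gone.

Definition gauge_push (v : Cantor -> Cantor) (x : Cantor) : G :=
  T (slope v (vinv v x)) (gauge (vinv v x)).

Lemma gauge_push_eq v ps x : inV v -> V_data v ps -> inQ2 x ->
  ~ In x (breakpoints ps) -> gauge_push v x = gauge x.
Proof.
  intros Hv HV Hx Hbreak. unfold gauge_push, gauge.
  rewrite <- apow_add by (now apply twist_inverse_pair).
  assert (Ey : v (vinv v x) = x) by now apply vinv_r.
  assert (L := last_one_slope v ps (vinv v x) Hv HV).
  rewrite Ey in L. f_equal. rewrite L; [lia| |exact Hbreak].
  apply (inV_inQ2 v _ Hv). now rewrite Ey.
Qed.

Lemma gauge_push_comp v w x : inV v -> inV w -> inQ2 x ->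
  gauge_push (fun z => v (w z)) x = T (slope v (vinv v x)) (gauge_push w (vinv v x)).
Proof.
  intros Hv Hw Hx. unfold gauge_push.
  assert (Qz : inQ2 (vinv w (vinv v x))).
  { apply (inV_inQ2 w _ Hw), (inV_inQ2 v _ Hv). now rewrite !vinv_r. }
  rewrite vinv_comp, slope_comp, vinv_r by assumption.
  now apply apow_add, twist_inverse_pair.
Qed.

(* [last_one] is a junk value off [Q_2]; there elements of the fraction group are trivial anyway. *)
Definition gauge_transform (p : FGel G) : FGel G :=
  (fun x => if excluded_middle_informative (inQ2 x)
            then gmul (gmul (gauge x) (fst p x)) (ginv (gauge_push (snd p) x))
            else fst p x,
   snd p).

Lemma gauge_transform_inFG p : inFG G p -> inFG G (gauge_transform p).
Proof.
  destruct p as [a v]. intros [Hsupp Hv]. split; [|exact Hv]. simpl.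
  pose proof Hv as [_ [ps HV]].
  apply (finsupp_transfer G a _ (breakpoints ps) Hsupp).
  - intros x Q. now destruct (excluded_middle_informative (inQ2 x)).
  - intros x Q Hbreak E. destruct (excluded_middle_informative (inQ2 x)); [|contradiction].
    rewrite E, gmul1r, (gauge_push_eq v ps x Hv HV Q Hbreak). apply gmulVr.
Qed.

Lemma gauge_transform_inj p q : gauge_transform p = gauge_transform q -> p = q.
Proof.
  destruct p as [a v], q as [b w]. unfold gauge_transform. simpl.
  intro E. injection E as Eab <-. f_equal. apply functional_extensionality. intro x.
  assert (X := f_equal (fun c => c x) Eab). simpl in X.
  destruct (excluded_middle_informative (inQ2 x)); [|exact X].
  apply (f_equal (fun g => gmul g (gauge_push v x))) in X. rewrite !gmulKV in X.
  exact (gmulI G _ _ _ X).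
Qed.

Lemma gauge_transform_surj q : inFG G q -> exists p, inFG G p /\ gauge_transform p = q.
Proof.
  destruct q as [b v]. intros [Hsupp Hv]. simpl in *. pose proof Hv as [_ [ps HV]].
  exists (fun x => if excluded_middle_informative (inQ2 x)
           then gmul (gmul (ginv (gauge x)) (b x)) (gauge_push v x)
           else b x, v).
  split; [split; [|exact Hv]|].
  - apply (finsupp_transfer G b _ (breakpoints ps) Hsupp); simpl.
    + intros x Q. now destruct (excluded_middle_informative (inQ2 x)).
    + intros x Q Hbreak E. destruct (excluded_middle_informative (inQ2 x)); [|contradiction].
      rewrite E, gmul1r, (gauge_push_eq v ps x Hv HV Q Hbreak). apply gmulV.
  - unfold gauge_transform. simpl. f_equal. apply functional_extensionality. intro x.
    destruct (excluded_middle_informative (inQ2 x)); [|reflexivity].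
    now rewrite !gmulA, gmulVr, gmul1, gmulK.
Qed.

Lemma gauge_transform_mul p q : inFG G p -> inFG G q ->
  gauge_transform (FGmul G alpha beta p q)
  = FGmul G alpha' beta' (gauge_transform p) (gauge_transform q).
Proof.
  destruct p as [a v], q as [b w]. intros [_ Hv] [Hb Hw]. simpl in *.
  unfold gauge_transform, FGmul, Vact. simpl. f_equal.
  apply functional_extensionality. intro x.
  assert (Ey : v (vinv v x) = x) by now apply vinv_r.
  set (y := vinv v x) in *.
  destruct (excluded_middle_informative (inQ2 x)) as [Qx|Qx];
    destruct (excluded_middle_informative (inQ2 y)) as [Qy|Qy].
  - rewrite gauge_push_comp by assumption. fold y.
    unfold gauge_push at 2. fold y. rewrite (logslope_slope v y Hv Qy).
    rewrite <- (gmulA G (gmul (gauge x) (a x))), twisted_cocycle by exact Ha.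
    now rewrite !gmulA.
  - exfalso. apply Qy, (inV_inQ2 v _ Hv). now rewrite Ey.
  - exfalso. apply Qx. rewrite <- Ey. now apply (inV_inQ2 v _ Hv).
  - assert (By : b y = gone).
    { destruct (excluded_middle_informative (b y = gone)) as [E|E]; [exact E|].
      destruct Hb as [s Hs]. exfalso. now apply Qy, (Hs y E). }
    rewrite By, (apow_automorphism_one G alpha beta _ Ha),
      (apow_automorphism_one G alpha' beta' _ (ad_comp_automorphism G alpha beta k Ha)).
    reflexivity.
Qed.

End Gauge.

Theorem mainTheorem9 (G : Group) (alpha alphainv : G -> G) (k : G) :
  is_automorphism G alpha alphainv ->
  FG_isomorphic G alpha alphainv
    (ad_comp G k alpha) (ad_comp_inv G k alphainv).
Proof.
  intro Ha. exists (gauge_transform G alpha alphainv k).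
  split; [|split; [|split]].
  - now apply gauge_transform_inFG.
  - intros p q _ _. apply gauge_transform_inj.
  - now apply gauge_transform_surj.
  - now apply gauge_transform_mul.
Qed.
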